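(* Let $\mu$ be a finite positive measure on $(\Omega,\mathcal B)$ with atoms $A_1,A_2,\dots$ arranged so that $\mu(A_i)\ge\mu(A_{i+1})$. Let $X=\operatorname{sp}\{1_A-1_B:A,B\in\mathcal B,\ \mu(A)=\mu(B)\}$ and let $X_1$ be the norm closure of $X$ in $L_1(\mu)$. Suppose there is a constant $K$ such that for all $i,m\in\mathbb N$ there exists $h\in X_1$ with $\operatorname{supp}(h-1_{A_i})\subset\Omega\setminus\bigcup_{j\le m}A_j$ and $\|h\|_1\le K\mu(A_i)$. If $F\in L_\infty(\mu)$ satisfies $\int hF\,d\mu=0$ for all $h\in X_1$, and $\lim_{n\to\infty}F(A_n)$ exists, then $F$ is ($\mu$-a.e.) constant.
   Context: An atom of $\mu$ is a set $A$ with $\mu(A)>0$ such that each measurable subset of $A$ has measure $0$ or $\mu(A)$. For a measurable function $F$ and an atom $A$, $F(A)$ denotes the ($\mu$-a.e.) constant value of $F$ on $A$. $\operatorname{sp}$ denotes linear span. *)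

From HB Require Import structures.
From mathcomp Require Import all_boot all_order all_algebra.
From mathcomp Require Import all_classical all_reals all_analysis.

Set Implicit Arguments.
Unset Strict Implicit.
Unset Printing Implicit Defensive.

Import Order.TTheory GRing.Theory Num.Theory.
Local Open Scope classical_set_scope.
Local Open Scope ring_scope.

Definition is_atom d (T : measurableType d) (R : realType)
  (mu : set T -> \bar R) (A : set T) : Prop :=
  measurable A /\ (0 < mu A)%E /\
  forall B, measurable B -> B `<=` A -> mu B = 0%E \/ mu B = mu A.

Definition eqmeas_span d (T : measurableType d) (R : realType)
  (mu : set T -> \bar R) : set (T -> R) :=
  [set g | exists (n : nat) (c : nat -> R) (A B : nat -> set T),
     (forall k, (k < n)%N ->
        [/\ measurable (A k), measurable (B k) & mu (A k) = mu (B k)]) /\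
     g = fun x => \sum_(k < n) c k * (\1_(A k) x - \1_(B k) x)].

Definition eqmeas_closure d (T : measurableType d) (R : realType)
  (mu : {measure set T -> \bar R}) : set (T -> R) :=
  [set h | mu.-integrable setT (EFin \o h) /\
     forall e : R, 0 < e ->
       exists2 g, eqmeas_span mu g &
         (\int[mu]_x (`|h x - g x|)%:E < e%:E)%E].

(* Since 1_B - 1_C lies in X_1 whenever mu(B) = mu(C), F has the same integral
   over any two sets of equal measure.  Let c be the limit of the values F(A_n).
   The complement N of the atoms carries no atom, so by Sierpinski's theorem
   every subset of N of positive measure contains a set of measure mu(A_n) for
   arbitrarily large n; comparing the integrals of F over that set and over A_n
   shows F = c a.e. on N.  On an atom A_i take h as in the hypothesis with m
   large: then \int h (F - c) = 0, while h (F - c) differs from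
   1_{A_i} (F(A_i) - c) by at most e |h|, so |F(A_i) - c| mu(A_i) <= e K mu(A_i)
   for every e > 0. *)

From HB Require Import structures.
From mathcomp Require Import all_boot all_order all_algebra.
From mathcomp Require Import all_classical all_reals all_analysis.
From mathcomp Require Import lra measurable_realfun.

Set Implicit Arguments.
Unset Strict Implicit.
Unset Printing Implicit Defensive.
Import Order.TTheory GRing.Theory Num.Theory.
Import numFieldNormedType.Exports.
Local Open Scope classical_set_scope.
Local Open Scope ring_scope.

Section real_facts.
Variable R : realType.

Lemma exists_natrM_gt (a b : R) : 0 < a -> exists n : nat, b < n%:R * a.
Proof.
by move=> a0; exists (Num.truncn (b / a)).+1; rewrite -ltr_pdivrMr ?truncnS_gt.
Qed.

Lemma eq0_le_mul_eps (x K : R) : (forall e, 0 < e -> `|x| <= e * K) -> x = 0.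
Proof.
move=> hx; apply/eqP; rewrite -normr_le0; apply: contraT; rewrite -ltNge => x0.
have [K0|K0] := leP K 0; first by have := hx 1 ltr01; lra.
have := hx (`|x| / 2 / K) (divr_gt0 (divr_gt0 x0 (ltr0Sn _ 1)) K0).
rewrite divfK ?gt_eqF //; lra.
Qed.

Lemma exists_half_max (X : Type) (P : X -> Prop) (f : X -> R) (b : R) x0 :
  P x0 -> (forall x, P x -> 0 <= f x <= b) ->
  exists2 x, P x & forall y, P y -> f y <= 2 * f x.
Proof.
move=> Px0 fb; pose E := f @` P.
have supE : has_sup E.
  by split; [exists (f x0), x0 | exists b => _ [x /fb /andP[_ fxb] <-]].
have [s0|s_gt0] := leP (sup E) 0.
  exists x0 => // y Py; have /(sup_upper_bound supE) : E (f y) by exists y.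
  by have /andP[+ _] := fb _ Px0; lra.
have [_ [x Px <-] hx] := sup_adherent (divr_gt0 s_gt0 (ltr0Sn _ 1)) supE.
exists x => // y Py; have /(sup_upper_bound supE) : E (f y) by exists y.
lra.
Qed.

End real_facts.

Section real_measure.
Context d (T : measurableType d) (R : realType)
  (mu : {finite_measure set T -> \bar R}).

Definition rmeasure (X : set T) : R := fine (mu X).
Local Notation m := rmeasure.

Lemma rmeasureE X : measurable X -> mu X = (m X)%:E.
Proof. by move=> mX; rewrite /m fineK // fin_num_measure. Qed.

Lemma rmeasure_ge0 X : 0 <= m X.
Proof. by rewrite /m fine_ge0. Qed.

Lemma rmeasure0 : m set0 = 0.
Proof. by rewrite /m measure0. Qed.

Lemma le_rmeasure X Y : measurable X -> measurable Y -> X `<=` Y -> m X <= m Y.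
Proof. by move=> mX mY XY; rewrite -lee_fin -!rmeasureE // le_measure ?inE. Qed.

Lemma rmeasureU X Y : measurable X -> measurable Y -> X `&` Y = set0 ->
  m (X `|` Y) = m X + m Y.
Proof. by move=> mX mY XY; rewrite /m measureU // fineD // fin_num_measure. Qed.

Lemma rmeasureD X Y : measurable X -> measurable Y -> Y `<=` X ->
  m (X `\` Y) = m X - m Y.
Proof.
move=> mX mY YX.
rewrite -[in m X](setDUK YX) rmeasureU ?setDIK //; last exact: measurableD.
by rewrite addrAC subrr add0r.
Qed.

Lemma rmeasure_bigcup_le (S : nat -> set T) t :
  (forall k, measurable (S k)) -> nondecreasing_seq S ->
  (forall k, m (S k) <= t) -> m (\bigcup_k S k) <= t.
Proof.
move=> mS ndS St.
have mU : measurable (\bigcup_k S k) by exact: bigcup_measurable.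
have cvS := @nondecreasing_cvg_mu _ _ _ mu _ mS mU ndS.
rewrite -lee_fin -rmeasureE // -(cvg_lim _ cvS) //.
apply: lime_le; first by apply/cvg_ex; exists (mu (\bigcup_k S k)).
by apply: nearW => k /=; rewrite rmeasureE // lee_fin.
Qed.

Lemma disjoint_rmeasure_small (A : nat -> set T) :
  (forall i, measurable (A i)) ->
  (forall i j, i <> j -> A i `&` A j = set0) ->
  forall r n0, 0 < r -> exists2 n, (n0 <= n)%N & m (A n) <= r.
Proof.
move=> mA Adisj r n0 r0; apply: contrapT => hno.
have Abig n : (n0 <= n)%N -> r < m (A n).
  by move=> n0n; rewrite ltNge; apply/negP => Anr; apply: hno; exists n.
pose V k := \big[setU/set0]_(i < k) A (n0 + i)%N.
have mV k : measurable (V k) by apply: bigsetU_measurable => i _.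
have VA k x : V k x -> exists2 i, (i < k)%N & A (n0 + i)%N x.
  rewrite /V -(bigcup_mkord k (fun i => A (n0 + i)%N)).
  by move=> -[i /= ik Ai]; exists i.
have Vbig k : k%:R * r <= m (V k).
  elim: k => [|k IH]; first by rewrite mul0r /V big_ord0 rmeasure0.
  rewrite /V big_ord_recr /= -/(V k) rmeasureU //.
    by rewrite -natr1 mulrDl mul1r; have := Abig (n0 + k)%N (leq_addr _ _); lra.
  apply/seteqP; split => // x [/VA [i ik Ai] Ak].
  have /Adisj/seteqP[+ _] : (n0 + i)%N <> (n0 + k)%N.
    by move/addnI => ik'; rewrite ik' ltnn in ik.
  by move/(_ x (conj Ai Ak)).
have [k hk] := exists_natrM_gt (m setT) r0.
by have := le_rmeasure (mV k) measurableT (@subsetT _ _); have := Vbig k; lra.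
Qed.

Lemma null_set_ae (S : set T) (Q : T -> Prop) : measurable S -> mu S = 0%E ->
  (forall x, ~ S x -> Q x) -> {ae mu, forall x, Q x}.
Proof.
move=> mS S0 SQ; exists S; split => // x /= nQx.
by apply: contrapT => nSx; exact: nQx (SQ x nSx).
Qed.

Lemma ae_eq_of_dist_lt (P : T -> Prop) (f : T -> R) a :
  (forall e, 0 < e -> {ae mu, forall x, P x -> `|f x - a| < e}) ->
  {ae mu, forall x, P x -> f x = a}.
Proof.
move=> fa; have fak k : {ae mu, forall x, P x -> `|f x - a| < k.+1%:R^-1}.
  by apply: fa; rewrite invr_gt0.
apply: filterS (ae_foralln fak) => x fx Px.
apply/eqP; rewrite -subr_eq0 -normr_le0; apply/ler_addgt0Pr => e e0.
have [k hk] := exists_natrM_gt 1 e0.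
rewrite add0r ltW // (lt_le_trans (fx k Px)) // -[_^-1]mulr1 ler_pdivrMl //.
by rewrite -natr1 mulrDl mul1r; lra.
Qed.

Lemma measurable_ge_set (f : T -> R) a : measurable_fun setT f ->
  measurable [set x | a <= f x].
Proof.
move=> mf; rewrite -[X in measurable X]setTI.
have -> : [set x | a <= f x] = f @^-1` `[a, +oo[.
  by apply/seteqP; split => x /=; rewrite in_itv /= andbT.
exact: mf (measurable_itv _).
Qed.

End real_measure.

Section sierpinski.
Context d (T : measurableType d) (R : realType)
  (mu : {finite_measure set T -> \bar R}).
Local Notation m := (rmeasure mu).

Lemma exists_near_max_extension P S t : measurable S -> m S <= t ->
  exists Q, [/\ measurable Q, Q `<=` P `\` S & m S + m Q <= t] /\
    forall Q', [/\ measurable Q', Q' `<=` P `\` S & m S + m Q' <= t] ->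
      m Q' <= 2 * m Q.
Proof.
move=> mS St; pose fits Q := [/\ measurable Q, Q `<=` P `\` S & m S + m Q <= t].
have fits0 : fits set0 by split; rewrite ?rmeasure0 ?addr0.
have [|Q fQ Qmax] := @exists_half_max _ _ fits m t _ fits0; last by exists Q.
move=> Q [_ _ SQt]; rewrite rmeasure_ge0 /=.
by have := rmeasure_ge0 mu S; lra.
Qed.

Variable N : set T.
Hypothesis N_nonatomic : forall P, measurable P -> P `<=` N -> 0 < m P ->
  exists Q, [/\ measurable Q, Q `<=` P, 0 < m Q & m Q < m P].

Lemma nonatomic_halving P k : measurable P -> P `<=` N -> 0 < m P ->
  exists Q, [/\ measurable Q, Q `<=` P, 0 < m Q & m Q * 2 ^+ k <= m P].
Proof.
move=> mP PN P0; elim: k => [|k [Q [mQ QP Q0 Qk]]].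
  by exists P; split => //; rewrite expr0 mulr1.
have [Q' [mQ' Q'Q Q'0 Q'Q_lt]] := N_nonatomic mQ (subset_trans QP PN) Q0.
have k0 : 0 < 2 ^+ k :> R by rewrite exprn_gt0.
(* Either Q' or Q \ Q' has at most half the measure of Q. *)
have [Q'_half|Q'_big] := leP (m Q' * 2) (m Q).
- exists Q'; split => //; first exact: subset_trans Q'Q QP.
  by apply: le_trans Qk; rewrite exprS mulrA ler_pM2r.
- exists (Q `\` Q'); split; first exact: measurableD.
  + by move=> x [/QP].
  + by rewrite rmeasureD // subr_gt0.
  + by apply: le_trans Qk; rewrite exprS mulrA ler_pM2r // rmeasureD //; lra.
Qed.

Lemma nonatomic_small P e : measurable P -> P `<=` N -> 0 < m P -> 0 < e ->
  exists Q, [/\ measurable Q, Q `<=` P, 0 < m Q & m Q < e].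
Proof.
move=> mP PN P0 e0; have [k hk] := exists_natrM_gt (m P) e0.
have [Q [mQ QP Q0 Qk]] := nonatomic_halving k mP PN P0.
exists Q; split => //; rewrite -(ltr_pM2r (exprn_gt0 k (ltr0Sn R 1))).
apply: le_lt_trans Qk (lt_le_trans hk _).
rewrite mulrC; apply: ler_wpM2l; first exact: ltW.
by rewrite -natrX ler_nat ltnW // ltn_expl.
Qed.

Theorem sierpinski P t : measurable P -> P `<=` N -> 0 <= t -> t <= m P ->
  exists S, [/\ measurable S, S `<=` P & m S = t].
Proof.
move=> mP PN t0 tP.
pose fits S Q := [/\ measurable Q, Q `<=` P `\` S & m S + m Q <= t].
have /choice[f hf] S : exists Q, measurable S -> m S <= t ->
    fits S Q /\ forall Q', fits S Q' -> m Q' <= 2 * m Q.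
  have [[mS St]|nS] := pselect (measurable S /\ m S <= t); last first.
    by exists set0 => mS St; case: nS.
  by have [Q hQ] := exists_near_max_extension P mS St; exists Q.
have disjS X Q : Q `<=` P `\` X -> X `&` Q = set0.
  by move=> QPX; apply/seteqP; split => // x [Xx /QPX[]].
pose S k := iter k (fun X => X `|` f X) set0.
have Sgood k : [/\ measurable (S k), S k `<=` P & m (S k) <= t].
  elim: k => [|k [mS SP St]]; first by split => //=; rewrite rmeasure0.
  have [[mQ QPS Qt] _] := hf _ mS St.
  split; [exact: measurableU | by move=> x [/SP|/QPS[]] |].
  by rewrite /= rmeasureU // disjS.
have mS k : measurable (S k) by case: (Sgood k).
pose U := \bigcup_k S k.
have mU : measurable U by exact: bigcup_measurable.
have SU k : S k `<=` U by move=> x Sx; exists k.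
have UP : U `<=` P by move=> x [k _]; case: (Sgood k) => _ SP _ /SP.
have Ut : m U <= t.
  apply: rmeasure_bigcup_le => // [|k]; last by case: (Sgood k).
  by apply/nondecreasing_seqP => k; rewrite subsetEset; exact: subsetUl.
have [|Ut_neq] := eqVneq (m U) t; first by exists U.
have Ult : m U < t by rewrite lt_neqAle Ut_neq Ut.
have mPU : measurable (P `\` U) by exact: measurableD.
have PU0 : 0 < m (P `\` U) by rewrite rmeasureD // subr_gt0; lra.
have tU0 : 0 < t - m U by rewrite subr_gt0.
have [Q [mQ QPU Q0 Qsmall]] :=
  nonatomic_small mPU (subset_trans (@subDsetl _ _ _) PN) PU0 tU0.
(* Q is admissible at every stage, so each greedy step adds at least m Q / 2
   and m (S k) would be unbounded. *)
have Sgrowth k : k%:R * (m Q / 2) <= m (S k).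
  elim: k => [|k IH]; first by rewrite mul0r rmeasure0.
  have [_ _ St] := Sgood k; have [[mfS fSPS _] fSmax] := hf _ (mS k) St.
  rewrite /= rmeasureU ?disjS // -natr1 mulrDl mul1r.
  suff : m Q <= 2 * m (f (S k)) by lra.
  apply: fSmax; split => //; first by move=> x /QPU[Px Ux]; split => // /(SU k).
  by have := le_rmeasure mu (mS k) mU (SU k); lra.
have [k hk] := exists_natrM_gt t (divr_gt0 Q0 (ltr0Sn R 1)).
by have := Sgrowth k; case: (Sgood k) => _ _; lra.
Qed.

End sierpinski.

Section integral_facts.
Context d (T : measurableType d) (R : realType)
  (mu : {finite_measure set T -> \bar R}).

Lemma ae_le_integrable D (f g : T -> R) : measurable D -> measurable_fun D f ->
  mu.-integrable D (EFin \o g) -> {ae mu, forall x, D x -> `|f x| <= g x} ->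
  mu.-integrable D (EFin \o f).
Proof.
move=> mD mf ig fg; apply/integrableP; split; first exact/measurable_EFinP.
case/integrableP: ig => mg; apply: le_lt_trans; apply: ae_ge0_le_integral => //.
- by apply: measurableT_comp => //; exact/measurable_EFinP.
- exact: measurableT_comp.
- apply: filterS fg => x fgx Dx /=.
  by rewrite lee_fin (le_trans (fgx Dx)) ?ler_norm.
Qed.

Lemma integrableM_ae_bounded (h f : T -> R) M :
  mu.-integrable setT (EFin \o h) -> measurable_fun setT f ->
  {ae mu, forall x, `|f x| <= M} ->
  mu.-integrable setT (EFin \o (fun x => h x * f x)).
Proof.
move=> ih mf fM; have /measurable_EFinP mh := measurable_int mu ih.
apply: (@ae_le_integrable _ _ (fun x => M * `|h x|)) => //.
- exact: measurable_funM.
- apply: (eq_integrable measurableT _ _ _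
    (integrableZl measurableT M (integrable_norm ih))).
  by move=> x _; rewrite /= EFinM.
- by apply: filterS fM => x fMx _; rewrite normrM mulrC; apply: ler_wpM2r.
Qed.

Lemma integral_indicM (A : set T) (f : T -> R) :
  (\int[mu]_x (\1_A x * f x)%:E = \int[mu]_(x in A) (f x)%:E)%E.
Proof.
rewrite [RHS]integral_mkcond; apply: eq_integral => x _.
by rewrite patchE indicE; case: (x \in A); rewrite ?mul1r ?mul0r.
Qed.

Lemma abse_integral_ae_le (f g : T -> R) : mu.-integrable setT (EFin \o f) ->
  measurable_fun setT g -> (forall x, 0 <= g x) ->
  {ae mu, forall x, `|f x| <= g x} ->
  (`|\int[mu]_x (f x)%:E| <= \int[mu]_x (g x)%:E)%E.
Proof.
move=> fi mg g0 fg.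
apply: le_trans (le_abse_integral mu measurableT (measurable_int mu fi)) _.
apply: ae_ge0_le_integral => //.
- exact/measurableT_comp/(measurable_int mu fi).
- by move=> x _; rewrite lee_fin.
- exact/measurable_EFinP.
- by apply: filterS fg => x fgx _; rewrite lee_fin.
Qed.

Lemma integrable_indicB (A B : set T) : measurable A -> measurable B ->
  mu.-integrable setT (EFin \o (fun x => \1_A x - \1_B x)).
Proof.
move=> mA mB; apply: (eq_integrable measurableT _ _ _ (integrableB measurableT
  (integrable_indic mu mA) (integrable_indic mu mB))).
by move=> x _; rewrite /= EFinB.
Qed.

Lemma integral_indicB (A B : set T) : measurable A -> measurable B ->
  (\int[mu]_x (\1_A x - \1_B x)%:E = mu A - mu B)%E.
Proof.
move=> mA mB; under eq_integral do rewrite EFinB.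
by rewrite integralB_EFin ?integral_indic ?setIT //; exact: integrable_indic.
Qed.

End integral_facts.

Section eqmeas.
Context d (T : measurableType d) (R : realType)
  (mu : {finite_measure set T -> \bar R}).

Lemma eqmeas_span_indicB (A B : set T) : measurable A -> measurable B ->
  mu A = mu B -> eqmeas_span mu (fun x => \1_A x - \1_B x).
Proof.
move=> mA mB AB; exists 1%N, (fun=> 1), (fun=> A), (fun=> B); split => //.
by apply/funext => x; rewrite big_ord1 mul1r.
Qed.

Lemma eqmeas_span_integrable g : eqmeas_span mu g ->
  mu.-integrable setT (EFin \o g).
Proof.
case=> n [a [A [B [hAB ->]]]].
have ik (k : 'I_n) : mu.-integrable setT
    (fun x => (a k)%:E * (\1_(A k) x - \1_(B k) x)%:E)%E.
  by have [mA mB _] := hAB k (ltn_ord k); exact/integrableZl/integrable_indicB.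
apply: (eq_integrable measurableT _ _ _
  (integrable_sum measurableT _ (fun k _ => ik k))).
by move=> x _; rewrite /= -sumEFin; apply: eq_bigr => k _; rewrite EFinM.
Qed.

Lemma eqmeas_span_integral0 g : eqmeas_span mu g ->
  (\int[mu]_x (g x)%:E = 0)%E.
Proof.
case=> n [a [A [B [hAB ->]]]].
have ik (k : 'I_n) : mu.-integrable setT
    (fun x => (a k)%:E * (\1_(A k) x - \1_(B k) x)%:E)%E.
  by have [mA mB _] := hAB k (ltn_ord k); exact/integrableZl/integrable_indicB.
rewrite (eq_integral (fun x => \sum_(k < n)
    (a k)%:E * (\1_(A k) x - \1_(B k) x)%:E)%E); last first.
  by move=> x _; rewrite -sumEFin; apply: eq_bigr => k _; rewrite EFinM.
rewrite (integral_sum measurableT ik); apply: big1 => k _.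
have [mA mB AB] := hAB k (ltn_ord k).
rewrite integralZl ?integral_indicB ?AB ?subee ?mule0 ?fin_num_measure //.
exact: integrable_indicB.
Qed.

Lemma eqmeas_span_closure g : eqmeas_span mu g -> eqmeas_closure mu g.
Proof.
move=> gX; split; first exact: eqmeas_span_integrable.
move=> e e0; exists g => //; under eq_integral do rewrite subrr normr0.
by rewrite integral0 lte_fin.
Qed.

Lemma eqmeas_closure_integral0 h : eqmeas_closure mu h ->
  (\int[mu]_x (h x)%:E = 0)%E.
Proof.
case=> ih happrox; have fh := integrable_fin_num measurableT ih.
rewrite -(fineK fh); congr EFin; apply/eqP; rewrite -normr_le0.
apply/ler_addgt0Pr => e e0; rewrite add0r.
have [g gX hg] := happrox e e0; have ig := eqmeas_span_integrable gX.
have ihg : mu.-integrable setT (EFin \o (fun x => h x - g x)).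
  apply: (eq_integrable measurableT _ _ _ (integrableB measurableT ih ig)).
  by move=> x _; rewrite /= EFinB.
have := le_abse_integral mu measurableT (measurable_int mu ihg).
rewrite /comp; under eq_integral do rewrite EFinB.
rewrite integralB_EFin // (eqmeas_span_integral0 gX) sube0 -(fineK fh) => le_hg.
by rewrite -lee_fin; apply/ltW/(le_lt_trans le_hg hg).
Qed.

End eqmeas.

Section atoms.
Context d (T : measurableType d) (R : realType)
  (mu : {finite_measure set T -> \bar R}) (A : nat -> set T).
Local Notation m := (rmeasure mu).
Hypothesis hatom : forall i, is_atom mu (A i).
Hypothesis hdisj : forall i j, i <> j -> A i `&` A j = set0.
Hypothesis hall : forall B, is_atom mu B -> exists i, mu (B `\` A i) = 0%E.
Variables (K : R) (F : T -> R) (M : R) (c : nat -> R).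
Hypothesis hK : forall i n : nat, exists2 h, eqmeas_closure mu h &
     {ae mu, forall x, (\bigcup_(j in [set j | (j <= n)%N]) A j) x ->
                       h x = \1_(A i) x} /\
     (\int[mu]_x (`|h x|)%:E <= K%:E * mu (A i))%E.
Hypothesis mF : measurable_fun setT F.
Hypothesis FM : {ae mu, forall x, `|F x| <= M}.
Hypothesis Forth : forall h, eqmeas_closure mu h ->
  (\int[mu]_x (h x * F x)%:E)%E = 0%E.
Hypothesis hc : forall n, {ae mu, forall x, A n x -> F x = c n}.
Hypothesis cc : cvgn c.
Let cl := limn c.
Let N := ~` \bigcup_j A j.

Lemma measurable_atom i : measurable (A i).
Proof. by case: (hatom i). Qed.

Lemma rmeasure_atom_gt0 i : 0 < m (A i).
Proof. by case: (hatom i) => mAi [+ _]; rewrite rmeasureE // lte_fin. Qed.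

Lemma integrableF D : measurable D -> mu.-integrable D (EFin \o F).
Proof.
move=> mD; apply: (@ae_le_integrable _ _ _ mu D F (cst M)) => //.
- exact: measurable_funS mF.
- exact: finite_measure_integrable_cst.
- by apply: filterS FM => x FMx _.
Qed.

Lemma eq_integral_eqmeas B C : measurable B -> measurable C -> mu B = mu C ->
  (\int[mu]_(x in B) (F x)%:E = \int[mu]_(x in C) (F x)%:E)%E.
Proof.
move=> mB mC BC.
have := Forth (eqmeas_span_closure (eqmeas_span_indicB mB mC BC)).
under eq_integral do rewrite mulrBl EFinB.
rewrite integralB_EFin ?integral_indicM //; last 2 first.
- exact: integrableM_ae_bounded (integrable_indic mu mB) mF FM.
- exact: integrableM_ae_bounded (integrable_indic mu mC) mF FM.
have fB := integrable_fin_num mB (integrableF mB).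
have fC := integrable_fin_num mC (integrableF mC).
rewrite -(fineK fB) -(fineK fC) -EFinB => -[] /eqP.
by rewrite subr_eq0 => /eqP ->.
Qed.

Lemma integral_atom n :
  (\int[mu]_(x in A n) (F x)%:E = (c n * m (A n))%:E)%E.
Proof.
have mAn := measurable_atom n.
rewrite (ae_eq_integral (cst (c n)%:E)) //.
- by rewrite integral_cst // EFinM -rmeasureE.
- by apply/measurable_EFinP; exact: measurable_funS mF.
- by apply: filterS (hc n) => x cAx /cAx ->.
Qed.

Lemma measurable_N : measurable N.
Proof.
by apply: measurableC; apply: bigcup_measurable => k _; exact: measurable_atom.
Qed.

Lemma nonatomic_N P : measurable P -> P `<=` N -> 0 < m P ->
  exists Q, [/\ measurable Q, Q `<=` P, 0 < m Q & m Q < m P].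
Proof.
move=> mP PN P0; apply: contrapT => noQ.
have Patom : is_atom mu P.
  split=> //; split=> [|B mB BP]; first by rewrite rmeasureE // lte_fin.
  have B_le := le_rmeasure mu mB mP BP; have B_ge0 := rmeasure_ge0 mu B.
  have [B0|B_neq0] := eqVneq (m B) 0; first by left; rewrite rmeasureE // B0.
  have [BP_eq|BP_neq] := eqVneq (m B) (m P).
    by right; rewrite !rmeasureE // BP_eq.
  exfalso; apply: noQ; exists B; split => //; first by rewrite lt_def B_neq0.
  by rewrite lt_def eq_sym BP_neq.
have [i] := hall Patom.
have -> : P `\` A i = P.
  apply/seteqP; split => [x []//|x Px]; split => // Ai.
  by apply: (PN x Px); exists i.
by move=> P0'; move: P0; rewrite /rmeasure P0' ltxx.
Qed.

Lemma N_level_null P s del : measurable P -> P `<=` N -> (s = 1 \/ s = -1) ->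
  0 < del -> (forall x, P x -> s * cl + del <= s * F x) -> m P = 0.
Proof.
move=> mP PN hs del0 hP; apply/eqP; apply: contraT => P_neq0.
have P0 : 0 < m P by rewrite lt_def P_neq0 rmeasure_ge0.
have [n1 _ hn1] := cvgr_dist_lt _ _ cc _ del0.
have [n n1n An_le] := disjoint_rmeasure_small mu measurable_atom hdisj n1 P0.
have [S [mS SP mSE]] :=
  sierpinski (mu := mu) nonatomic_N mP PN (rmeasure_ge0 mu _) An_le.
(* S and A n have the same measure, hence the same integral of F; but the
   average of s * F is at least s * cl + del over S and is s * c n over A n. *)
have SAn : mu S = mu (A n).
  by rewrite !rmeasureE ?mSE //; exact: measurable_atom.
have lb : (((s * cl + del) * m S)%:E <= s%:E * \int[mu]_(x in S) (F x)%:E)%E.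
  rewrite -integralZl //; last exact: integrableF.
  rewrite EFinM -rmeasureE // -integral_cst //; apply: le_integral => //.
  - exact: finite_measure_integrable_cst.
  - by apply: integrableZl => //; exact: integrableF.
  - by move=> x /set_mem Sx /=; rewrite -EFinM lee_fin; exact/hP/SP.
rewrite (eq_integral_eqmeas mS (measurable_atom n) SAn) integral_atom in lb.
rewrite -EFinM lee_fin mSE in lb.
have := rmeasure_atom_gt0 n; have := hn1 n n1n.
rewrite /= ltr_norml => /andP[cn_gt cn_lt] An0.
by rewrite /cl in lb; case: hs => s1; rewrite s1 in lb; nra.
Qed.

Lemma ae_N_dist_lt del : 0 < del ->
  {ae mu, forall x, N x -> `|F x - cl| < del}.
Proof.
move=> del0.
have level_ae s : s = 1 \/ s = -1 ->
    {ae mu, forall x, N x -> s * F x < s * cl + del}.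
  move=> hs; pose P := N `&` [set x | s * cl + del <= s * F x].
  have mP : measurable P.
    apply: measurableI measurable_N (measurable_ge_set _ _).
    by apply: measurable_funM.
  apply: (null_set_ae mP).
    by rewrite rmeasureE // (N_level_null mP _ hs del0) // => x [].
  by move=> x nPx Nx; rewrite ltNge; apply/negP => hx; apply: nPx.
apply: filterS (filterI (level_ae 1 (or_introl erefl))
  (level_ae (-1) (or_intror erefl))) => x [h1 h2] Nx.
have := h1 Nx; have := h2 Nx; rewrite !mul1r !mulN1r ltr_norml => ? ?.
by apply/andP; split; lra.
Qed.

Lemma F_eq_lim_on_N : {ae mu, forall x, N x -> F x = cl}.
Proof. exact: ae_eq_of_dist_lt ae_N_dist_lt. Qed.

Lemma closure_integrable_mulFB h a : eqmeas_closure mu h ->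
  mu.-integrable setT (EFin \o (fun x => h x * (F x - a))).
Proof.
case=> ih _; apply: (integrableM_ae_bounded (M := M + `|a|)) ih _ _.
  by apply: measurable_funB.
apply: filterS FM => x FMx.
by apply: le_trans (ler_normB _ _) _; rewrite lerD2r.
Qed.

Lemma closure_integral_mulFB h a : eqmeas_closure mu h ->
  (\int[mu]_x (h x * (F x - a))%:E = 0)%E.
Proof.
move=> hX; have [ih _] := hX.
have iha : mu.-integrable setT (EFin \o (fun x => h x * a)).
  apply: (eq_integrable measurableT _ _ _ (integrableZl measurableT a ih)).
  by move=> x _; rewrite /= mulrC EFinM.
under eq_integral do rewrite mulrBr EFinB.
rewrite integralB_EFin ?Forth //; last exact: integrableM_ae_bounded ih mF FM.
under eq_integral do rewrite mulrC EFinM.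
by rewrite integralZl // eqmeas_closure_integral0 // mule0 sube0.
Qed.

Lemma atom_residual_le i n e h : (i <= n)%N ->
  (forall j, (n < j)%N -> `|c j - cl| <= e) ->
  {ae mu, forall x, (\bigcup_(j in [set j | (j <= n)%N]) A j) x ->
                    h x = \1_(A i) x} ->
  {ae mu, forall x, `|h x * (F x - cl) - (c i - cl) * \1_(A i) x|
                    <= e * `|h x|}.
Proof.
move=> i_n c_near hA.
have e0 : 0 <= e by apply: le_trans (c_near n.+1 (ltnSn n)).
apply: filterS (filterI hA (filterI (ae_foralln hc) F_eq_lim_on_N)).
move=> x [hAx [Fc FN]].
have [[j _ Ajx]|nA] := pselect ((\bigcup_j A j) x); last first.
  rewrite FN // subrr mulr0 indicE memNset ?mulr0 ?subr0 ?normr0 ?mulr_ge0 //.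
  by move=> Aix; apply: nA; exists i.
rewrite (Fc j Ajx); have [ji|ji] := eqVneq j i.
  subst j; rewrite hAx; last by exists i.
  by rewrite indicE mem_set // mul1r mulr1 subrr normr0 mulr_ge0.
have Aix0 : \1_(A i) x = 0 :> R.
  rewrite indicE memNset // => Aix.
  by have /seteqP[/(_ x (conj Ajx Aix))] := hdisj (elimN eqP ji).
rewrite Aix0 mulr0 subr0; have [j_le_n|n_lt_j] := leqP j n.
  by rewrite hAx ?Aix0 ?mul0r ?normr0 ?mulr_ge0 //; exists j.
by rewrite normrM mulrC; apply: ler_wpM2r => //; exact: c_near.
Qed.

Lemma atom_value_le i e : 0 < e -> `|c i - cl| <= e * K.
Proof.
move=> e0; have [n1 _ hn1] := cvgr_dist_lt _ _ cc _ e0.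
have [h hX [hA hK_i]] := hK i (maxn n1 i).
have [ih _] := hX; have mAi := measurable_atom i.
have c_near j : (maxn n1 i < j)%N -> `|c j - cl| <= e.
  by move/ltnW; rewrite geq_max => /andP[n1j _]; rewrite distrC ltW // hn1.
pose r x := h x * (F x - cl) - (c i - cl) * \1_(A i) x.
have iA : mu.-integrable setT (EFin \o (fun x => (c i - cl) * \1_(A i) x)).
  apply: (eq_integrable measurableT _ _ _ (integrableZl measurableT (c i - cl)
    (integrable_indic mu mAi))).
  by move=> x _; rewrite /= EFinM.
have ir : mu.-integrable setT (EFin \o r).
  apply: (eq_integrable measurableT _ _ _ (integrableB measurableT
    (closure_integrable_mulFB cl hX) iA)).
  by move=> x _; rewrite /= /r EFinB.
have int_r : (\int[mu]_x (r x)%:E = - ((c i - cl) * m (A i))%:E)%E.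
  rewrite /r; under eq_integral do rewrite EFinB.
  rewrite integralB_EFin ?closure_integrable_mulFB // closure_integral_mulFB //.
  under eq_integral do rewrite EFinM.
  rewrite (integralZl measurableT (integrable_indic mu mAi)).
  rewrite integral_indic // setIT EFinM /rmeasure fineK ?fin_num_measure //.
  by rewrite sub0e.
have le_r : (`|\int[mu]_x (r x)%:E| <= \int[mu]_x (e * `|h x|)%:E)%E.
  apply: abse_integral_ae_le ir _ _
    (atom_residual_le (leq_maxr n1 i) c_near hA).
  - have /measurable_EFinP mh := measurable_int mu ih.
    by apply: measurable_funM => //; exact: measurableT_comp.
  - by move=> x; apply: mulr_ge0 => //; exact: ltW.
have int_eh : (\int[mu]_x (e * `|h x|)%:E = e%:E * \int[mu]_x (`|h x|)%:E)%E.
  under eq_integral do rewrite EFinM.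
  by rewrite integralZl //; exact: integrable_norm.
have e0E : (0 <= e%:E)%E by rewrite lee_fin ltW.
move: le_r; rewrite int_r abseN int_eh => /le_trans/(_ (lee_wpmul2l e0E hK_i)).
rewrite (rmeasureE mu mAi) -!EFinM lee_fin normrM mulrA.
by rewrite (gtr0_norm (rmeasure_atom_gt0 i)) ler_pM2r ?rmeasure_atom_gt0.
Qed.

Lemma atom_value i : c i = cl.
Proof.
by apply/subr0_eq/(@eq0_le_mul_eps _ _ K) => e e0; exact: atom_value_le.
Qed.

Lemma F_ae_const : exists k : R, {ae mu, forall x, F x = k}.
Proof.
exists cl; apply: filterS (filterI (ae_foralln hc) F_eq_lim_on_N) => x [Fc FN].
have [[j _ Ajx]|nA] := pselect ((\bigcup_j A j) x); last exact: FN.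
by rewrite (Fc j Ajx) atom_value.
Qed.

End atoms.

Theorem theorem2p2 (d : measure_display) (T : measurableType d) (R : realType)
  (mu : {finite_measure set T -> \bar R}) (A : nat -> set T)
  (hatom : forall i, is_atom mu (A i))
  (hdisj : forall i j, i <> j -> A i `&` A j = set0)
  (hall : forall B, is_atom mu B -> exists i, mu (B `\` A i) = 0%E)
  (hdec : forall i, (mu (A i.+1) <= mu (A i))%E)
  (K : R)
  (hK : forall i m : nat, exists2 h, eqmeas_closure mu h &
     {ae mu, forall x, (\bigcup_(j in [set j | (j <= m)%N]) A j) x ->
                       h x = \1_(A i) x} /\
     (\int[mu]_x (`|h x|)%:E <= K%:E * mu (A i))%E)
  (F : T -> R) (mF : measurable_fun setT F)
  (Fbd : exists M : R, {ae mu, forall x, `|F x| <= M})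
  (Forth : forall h, eqmeas_closure mu h -> (\int[mu]_x (h x * F x)%:E)%E = 0%E)
  (Flim : exists c : nat -> R,
     (forall n, {ae mu, forall x, A n x -> F x = c n}) /\ cvgn c) :
  exists k : R, {ae mu, forall x, F x = k}.
Proof.
have [M FM] := Fbd; have [c [hc cc]] := Flim.
exact (F_ae_const hatom hdisj hall hK mF FM Forth hc cc).
Qed.
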